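(* Let $\mathbf{r}=(r_1,\dots,r_n)$ be a vector of positive integers. Then $$\sum_{\sigma\in\mathfrak{S}^{\mathbf{r}}_n}q^{\mathrm{maj}(\sigma)}=[n]!\cdot\prod_{i=1}^n\big(1+(r_i-1)\,q\big).$$
   Context: For $1\le i\le n$ let $S_i=\{-1\}\cup\{2,3,\dots,r_i\}$ (a set of size $r_i$). An $\mathbf{r}$-signed permutation is a list $\sigma=(\sigma_1,\dots,\sigma_{n+1})=((j_1,\pi_1),(j_2,\pi_2),\dots,(j_n,\pi_n),0)$ where $\pi_1\cdots\pi_n$ is a permutation of $\{1,\dots,n\}$ and $j_k\in S_{\pi_k}$ for each $k$; $\mathfrak{S}^{\mathbf{r}}_n$ denotes the set of these. The entries lie in $\Lambda=\{(j,i):1\le i\le n,\ j\in S_i\}\cup\{0\}$, linearly ordered as follows: pairs are compared lexicographically (first by $j$, then by $i$), and $0<(j,i)$ if and only if $j>0$. The descent set is $\mathrm{Des}(\sigma)=\{k\in\{1,\dots,n\}:\sigma_k>\sigma_{k+1}\}$ and $\mathrm{maj}(\sigma)=\sum_{k\in\mathrm{Des}(\sigma)}k$. $[m]=1+q+\cdots+q^{m-1}$ and $[n]!=[n][n-1]\cdots[1]$. *)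

From HB Require Import structures.
From mathcomp Require Import all_boot all_order all_algebra all_fingroup.
Set Implicit Arguments. Unset Strict Implicit. Unset Printing Implicit Defensive.
Import Order.TTheory GRing.Theory Num.Theory.
Local Open Scope ring_scope.

(* Indices are 0-based: the paper's i in {1..n} is our i : 'I_n (value i-1).
   This shift is order preserving, so the order on Lambda is unchanged. *)

Definition inS n (r : 'I_n -> nat) (i : 'I_n) (j : int) : bool :=
  (j == -1) || ((2%:Z <= j) && (j <= (r i)%:Z)).

(* Entries of Lambda: None is 0, Some (j, i) is the pair (j, i). *)
Definition entry := option (int * nat).

(* strict order on Lambda: pairs lexicographic; 0 < (j,i) iff j > 0
   (hence, the order being linear and j <> 0, (j,i) < 0 iff j <= 0). *)
Definition ltE (x y : entry) : bool :=
  match x, y with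
  | Some (j, i), Some (j', i') => (j < j') || ((j == j') && (i < i')%N)
  | None, Some (j, _) => 0 < j
  | Some (j, _), None => ~~ (0 < j)
  | None, None => false
  end.

(* sigma_{k+1} for k : nat (0-based position): sigma_{n+1} = 0 *)
Definition sigma_at n (p : 'S_n) (J : 'I_n -> int) (k : nat) : entry :=
  match insub k : option 'I_n with
  | Some k' => Some (J k', val (p k'))
  | None => None
  end.

(* maj: paper position k+1 (k : 'I_n) is a descent iff sigma_{k+1} > sigma_{k+2} *)
Definition maj n (p : 'S_n) (J : 'I_n -> int) : nat :=
  (\sum_(k < n | ltE (sigma_at p J k.+1) (sigma_at p J k)) k.+1)%N.

Definition qint (m : nat) : {poly int} := \sum_(i < m) 'X^i.
Definition qfact (n : nat) : {poly int} := \prod_(m < n) qint m.+1.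

(* bound on the codes used to enumerate the letters j: a code c : 'I_(rmax r)
   stands for the integer c - 1, covering -1 .. max r_i *)
Definition rmax n (r : 'I_n -> nat) : nat := (\max_(i < n) r i + 2)%N.
Definition decJ n (r : 'I_n -> nat) (J : {ffun 'I_n -> 'I_(rmax r)}) (k : 'I_n) : int :=
  (val (J k))%:Z - 1.

(* Index the letters by value instead of position: the entry with second component i
   carries a letter L i in S_i, and sigma arranges the n distinct entries (L i, i)
   followed by 0.  For fixed letters, summing q^maj over the arrangements of n distinct
   entries followed by a fixed entry z gives q^(number of entries above z) [n]!: peel
   off the next-to-last entry y; by induction the rest contributes q^k [n-1]!, where k
   entries exceed y, and the descent at y adds n exactly when z < y, so over the n
   choices of y the exponents are n consecutive integers and produce the factor [n].
   For z = 0 the exponent counts the positive letters, and the letters, now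
   independent, contribute prod_i (1 + (r_i - 1) q). *)
From mathcomp Require Import all_boot all_order all_algebra all_fingroup.
From mathcomp Require Import zify ring.
Import GRing.Theory.
Local Open Scope ring_scope.

Lemma big_permutations_rev (T : eqType) (R : nmodType) (s : seq T) (F : seq T -> R) :
  \sum_(t <- permutations s) F (rev t) = \sum_(t <- permutations s) F t.
Proof.
rewrite -(big_map rev xpredT F); apply: perm_big; apply: uniq_perm.
- by rewrite (map_inj_uniq (can_inj (@revK _))) permutations_uniq.
- exact: permutations_uniq.
move=> t; apply/mapP/idP => [[t' t'P ->] | tP].
  by move: t'P; rewrite !mem_permutations perm_rev.
by exists (rev t); rewrite ?revK // mem_permutations perm_rev -mem_permutations.
Qed.

Lemma big_permutations_rcons (T : eqType) (R : nmodType) (s : seq T)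
    (F : seq T -> R) : (0 < size s)%N ->
  \sum_(t <- permutations s) F t =
  \sum_(y <- undup s) \sum_(t <- permutations (rem y s)) F (rcons t y).
Proof.
move=> s_gt0; rewrite -big_permutations_rev (perm_big _ (permutationsE s_gt0)).
rewrite big_allpairs_dep; apply: eq_bigr => y _.
by rewrite -big_permutations_rev; apply: eq_bigr => t _; rewrite rev_cons.
Qed.

Lemma big_perm_permutations {T : eqType} {R : nmodType} {n} (H : seq T -> R)
    {g : 'I_n -> T} : injective g ->
  \sum_(p : 'S_n) H [seq g (p k) | k <- enum 'I_n]
  = \sum_(t <- permutations [seq g k | k <- enum 'I_n]) H t.
Proof.
move=> g_inj; set F := fun p : 'S_n => [seq g (p k) | k <- enum 'I_n].
have FE p : F p = map g (map p (enum 'I_n)) by rewrite -map_comp.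
rewrite -(big_map F xpredT H); apply: perm_big.
have F_inj : injective F.
  move=> p p'; rewrite !FE => /(inj_map g_inj) /eq_in_map Epp'.
  by apply/permP => i; apply: Epp'; rewrite mem_enum.
have uniqF : uniq (map F (index_enum {perm 'I_n})).
  by rewrite (map_inj_uniq F_inj) index_enum_uniq.
have subF : {subset map F (index_enum {perm 'I_n})
              <= permutations [seq g k | k <- enum 'I_n]}.
  move=> t /mapP[p _ ->]; rewrite mem_permutations FE; apply: perm_map.
  apply: uniq_perm; rewrite ?(map_inj_uniq (@perm_inj _ p)) ?enum_uniq //.
  move=> x; rewrite mem_enum; apply/mapP; exists (p^-1 x)%g; rewrite ?mem_enum ?permKV //.
have sizeF : (size (permutations [seq g k | k <- enum 'I_n])
              <= size (map F (index_enum {perm 'I_n})))%N.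
  rewrite size_permutations; last by rewrite (map_inj_uniq g_inj) enum_uniq.
  by rewrite !size_map -enumT size_enum_ord /index_enum unlock -enumT -cardT card_Sn.
have [_ eqF] := uniq_min_size uniqF subF sizeF.
exact: uniq_perm uniqF (permutations_uniq _) eqF.
Qed.

Lemma count_ltn_subpred (T : eqType) (a b : pred T) (u : seq T) x :
  subpred a b -> x \in u -> b x -> ~~ a x -> (count a u < count b u)%N.
Proof.
move=> sub_ab; elim: u => // y u IH; rewrite inE => /orP[/eqP<- | xu] bx nax /=.
  by rewrite (negbTE nax) bx add0n add1n ltnS sub_count.
have := IH xu bx nax; case ay: (a y); first by rewrite (sub_ab _ ay); lia.
by case: (b y) => /=; lia.
Qed.

Lemma exprn_count (R : pzSemiRingType) (x : R) (T : Type) (P : pred T) (s : seq T) :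
  x ^+ count P s = \prod_(i <- s) (if P i then x else 1).
Proof.
elim: s => [|y s IH]; first by rewrite big_nil expr0.
by rewrite big_cons /= exprD IH; case: (P y); rewrite ?expr1 ?expr0.
Qed.

Lemma sum_Xn_iota c m : \sum_(k <- iota c m) ('X^k : {poly int}) = 'X^c * qint m.
Proof.
rewrite /qint big_distrr /= -[c]addn0 iotaDl big_map -val_enum_ord big_map big_enum.
by apply: eq_bigr => i _; rewrite addn0 exprD.
Qed.

Lemma qfactS n : qfact n.+1 = qfact n * qint n.+1.
Proof. by rewrite /qfact big_ord_recr. Qed.

Section MajorIndexOfWords.

Context {T : eqType} (lt : rel T).

(* [maj_from k x s] is the major index of [x :: s] when [x] sits at position [k]. *)
Fixpoint maj_from (k : nat) (x : T) (s : seq T) : nat :=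
  if s is y :: s' then ((if lt y x then k else 0) + maj_from k.+1 y s')%N else 0%N.

Definition majs (s : seq T) : nat := if s is x :: s' then maj_from 1 x s' else 0%N.

Lemma maj_from_rcons k x s z : maj_from k x (rcons s z) =
  (maj_from k x s + (if lt z (last x s) then k + size s else 0))%N.
Proof.
elim: s x k => [|y s IH] x k /=; first by rewrite !addn0.
by rewrite IH addnA; congr (_ + _)%N; case: ifP => //; lia.
Qed.

Lemma majs_rcons_rcons t y z : majs (rcons (rcons t y) z) =
  (majs (rcons t y) + (if lt z y then (size t).+1 else 0))%N.
Proof.
case: t => [|x t] /=; first by rewrite addn0.
by rewrite maj_from_rcons last_rcons size_rcons.
Qed.

Lemma big_descents_majs (f : nat -> T) m :
  (\sum_(k < m | lt (f k.+1) (f k)) k.+1)%N = majs [seq f k | k <- iota 0 m.+1].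
Proof.
elim: m => [|m IH]; first by rewrite big_ord0.
rewrite big_mkcond big_ord_recr -big_mkcond IH.
have iotaS k : iota 0 k.+1 = rcons (iota 0 k) k by rewrite -addn1 iotaD cats1.
by rewrite (iotaS m.+1) map_rcons (iotaS m) map_rcons majs_rcons_rcons size_map size_iota.
Qed.

Hypothesis lt_trans : transitive lt.
Hypothesis lt_irr : irreflexive lt.
Hypothesis lt_total : forall {x y : T}, x != y -> lt x y || lt y x.

Lemma count_gt_lt_size {y u} : y \in u -> (count (lt y) u < size u)%N.
Proof.
move=> yu; rewrite -count_predT; apply: (@count_ltn_subpred _ _ _ _ y) => //.
by rewrite lt_irr.
Qed.

Lemma count_gt_lt {y y' u} : lt y y' -> y' \in u -> (count (lt y') u < count (lt y) u)%N.
Proof.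
move=> lt_yy' y'u; apply: (@count_ltn_subpred _ _ _ _ y') => //; last by rewrite lt_irr.
by move=> x; apply: lt_trans.
Qed.

Lemma perm_descent_weights {z u} : uniq (z :: u) ->
  perm_eq [seq ((if lt z y then size u else 0) + count (lt y) u)%N | y <- u]
          (iota (count (lt z) u) (size u)).
Proof.
move=> /= /andP[zNu uniq_u]; set e := fun y => _.
have neq_z y : y \in u -> y != z by move=> yu; apply: contraNneq zNu => <-.
have e_lt a b : a \in u -> b \in u -> lt a b -> e a != e b.
  move=> au bu lt_ab; rewrite /e.
  have := count_gt_lt lt_ab bu; have := count_gt_lt_size au.
  have := count_gt_lt_size bu.
  by case: (lt z a); case: (lt z b) => /= *; lia.
have uniq_e : uniq (map e u).
  rewrite map_inj_in_uniq // => a b au bu eq_ab; apply/eqP; apply: contraT => ne_ab.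
  by case/orP: (lt_total ne_ab) => [/(e_lt _ _ au bu) | /(e_lt _ _ bu au)];
    rewrite eq_ab eqxx.
have sub_e : {subset map e u <= iota (count (lt z) u) (size u)}.
  move=> k /mapP[y yu ->]; rewrite mem_iota /e.
  have := count_gt_lt_size yu; have := count_size (lt z) u.
  case lt_zy: (lt z y); first by have := count_gt_lt lt_zy yu; lia.
  have lt_yz : lt y z.
    by case/orP: (lt_total (neq_z y yu)) => //; rewrite lt_zy.
  have : (count (lt z) u <= count (lt y) u)%N.
    by apply: sub_count => x; apply: lt_trans.
  lia.
have size_e : (size (iota (count (lt z) u) (size u)) <= size (map e u))%N.
  by rewrite size_iota size_map.
have [_ eq_e] := uniq_min_size uniq_e sub_e size_e.
exact: uniq_perm uniq_e (iota_uniq _ _) eq_e.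
Qed.

Lemma sum_Xn_descent_weights z u : uniq (z :: u) ->
  \sum_(y <- u) ('X^((if lt z y then size u else 0) + count (lt y) u) : {poly int})
  = 'X^(count (lt z) u) * qint (size u).
Proof.
by move=> uniq_zu; rewrite -sum_Xn_iota -(perm_big _ (perm_descent_weights uniq_zu)) big_map.
Qed.

Lemma sum_permutations_majs_rcons z u : uniq (z :: u) ->
  \sum_(t <- permutations u) ('X^(majs (rcons t z)) : {poly int})
  = 'X^(count (lt z) u) * qfact (size u).
Proof.
have [n] : {n | size u = n} by exists (size u).
elim: n u z => [|n IH] u z size_u uniq_zu; rewrite size_u.
  by case: u size_u {uniq_zu} => // _; rewrite /= big_seq1 /qfact big_ord0 mulr1.
have /andP[zNu uniq_u] := uniq_zu.
have last_step y : y \in u ->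
    \sum_(t <- permutations (rem y u)) ('X^(majs (rcons (rcons t y) z)) : {poly int})
    = 'X^((if lt z y then size u else 0) + count (lt y) u) * qfact n.
  move=> yu; have perm_yu : perm_eq u (y :: rem y u) := perm_to_rem yu.
  have size_rem : size (rem y u) = n by rewrite size_rem // size_u.
  have count_rem : count (lt y) u = count (lt y) (rem y u).
    by rewrite (seq.permP perm_yu) /= lt_irr.
  rewrite big_seq; under eq_bigr => t.
    rewrite mem_permutations => /perm_size size_t.
    rewrite majs_rcons_rcons size_t size_rem -size_u exprD; over.
  rewrite -big_seq -big_distrl /= IH -?(perm_uniq perm_yu) // count_rem size_rem.
  by rewrite exprD; ring.
rewrite big_permutations_rcons ?size_u // undup_id // (eq_big_seq _ last_step).
by rewrite -big_distrl /= sum_Xn_descent_weights // size_u qfactS; ring.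
Qed.

End MajorIndexOfWords.

Lemma ltE_trans : transitive ltE.
Proof. by case=> [[j i]|]; case=> [[j' i']|]; case=> [[j'' i'']|] //=; lia. Qed.

Lemma ltE_irr : irreflexive ltE.
Proof. by case=> [[j i]|] //=; lia. Qed.

Lemma ltE_total x y : x != y -> ltE x y || ltE y x.
Proof.
case: x => [[j i]|]; case: y => [[j' i']|] //=; try lia.
by case: (eqVneq j j') => [->|]; case: (eqVneq i i') => [->|]; rewrite ?eqxx //; lia.
Qed.

Lemma eq_maj n (p : 'S_n) (J J' : 'I_n -> int) : J =1 J' -> maj p J = maj p J'.
Proof.
move=> eqJ; have eq_sigma k : sigma_at p J k = sigma_at p J' k.
  by rewrite /sigma_at; case: insub => // k'; rewrite eqJ.
by apply: eq_bigl => k; rewrite !eq_sigma.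
Qed.

Lemma maj_majs n (p : 'S_n) (J : 'I_n -> int) :
  maj p J = majs ltE (rcons [seq Some (J k, val (p k)) | k <- enum 'I_n] None).
Proof.
rewrite /maj big_descents_majs -(addn1 n) iotaD cats1 map_rcons add0n.
have -> : sigma_at p J n = None by rewrite /sigma_at insubN // ltnn.
congr (majs _ (rcons _ _)); rewrite -val_enum_ord -map_comp.
by apply: eq_map => k /=; rewrite /sigma_at valK.
Qed.

Lemma sum_perm_maj_fixed_letters n (L : 'I_n -> int) :
  \sum_(p : 'S_n) ('X^(maj p (fun k => L (p k))) : {poly int})
  = qfact n * \prod_(i < n) (if 0 < L i then 'X else 1).
Proof.
pose g i : entry := Some (L i, val i).
have g_inj : injective g by move=> i j [] _ /val_inj.
under eq_bigr => p _ do rewrite maj_majs.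
rewrite (big_perm_permutations (fun t => 'X^(majs ltE (rcons t None))) g_inj).
rewrite (sum_permutations_majs_rcons ltE ltE_trans ltE_irr ltE_total); last first.
  by rewrite /= (map_inj_uniq g_inj) enum_uniq andbT; apply/mapP => -[].
rewrite size_map size_enum_ord mulrC count_map exprn_count big_enum.
by congr (_ * _); apply: eq_bigr.
Qed.

Lemma sum_maj_letters_by_value n (r : 'I_n -> nat) (p : 'S_n) :
  \sum_(J : {ffun 'I_n -> 'I_(rmax r)} | [forall k, inS r (p k) (decJ J k)])
     ('X^(maj p (decJ J)) : {poly int})
  = \sum_(K : {ffun 'I_n -> 'I_(rmax r)} | [forall i, inS r i (decJ K i)])
     'X^(maj p (fun k => decJ K (p k))).
Proof.
pose relabel (K : {ffun 'I_n -> 'I_(rmax r)}) := [ffun k => K (p k)].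
have relabel_inj : injective relabel.
  by move=> K K' /ffunP eqK; apply/ffunP => i; have := eqK (p^-1 i)%g; rewrite !ffunE permKV.
rewrite (reindex_inj relabel_inj); apply: eq_big => K.
  apply/forallP/forallP => inS_K i; last by have := inS_K (p i); rewrite /decJ ffunE.
  by have := inS_K (p^-1 i)%g; rewrite /decJ ffunE permKV.
by move=> _; apply/congr1/eq_maj => k; rewrite /decJ ffunE.
Qed.

Lemma sum_letter_weights N R : (0 < R)%N -> (R.+2 <= N)%N ->
  \sum_(c < N | (c%:Z - 1 == -1) || ((2%:Z <= c%:Z - 1) && (c%:Z - 1 <= R%:Z)))
     (if 0 < c%:Z - 1 then 'X else 1 : {poly int})
  = 1 + (R%:R - 1) *: 'X.
Proof.
case: N => // N R_gt0 RN; rewrite big_mkcond big_ord_recl /= -big_mkcond.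
congr (_ + _); transitivity (\sum_(i < N | (2 <= i < R.+1)%N) ('X : {poly int})).
  apply: eq_big => [i | i]; rewrite /bump /=; first lia.
  by move=> /andP[i_ge2 _]; case: ifP => // /negbT/negP[]; lia.
rewrite -(@big_ord_widen_cond _ _ _ R.+1 N (leq 2) (fun=> 'X)) //.
have -> : \sum_(i < R.+1 | (2 <= i)%N) ('X : {poly int}) = \sum_(2 <= i < R.+1) 'X.
  by rewrite big_geq_mkord.
by rewrite sumr_const_nat -scaler_nat subSS natrB.
Qed.

Theorem mainTheorem9 (n : nat) (r : 'I_n -> nat) (hr : forall i, (0 < r i)%N) :
  \sum_(p : 'S_n)
     \sum_(J : {ffun 'I_n -> 'I_(rmax r)} | [forall k, inS r (p k) (decJ J k)])
        'X^(maj p (decJ J))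
  = qfact n * \prod_(i < n) (1 + ((r i)%:R - 1) *: 'X).
Proof.
under eq_bigr => p _ do rewrite sum_maj_letters_by_value.
rewrite exchange_big /=.
under eq_bigr => K _ do rewrite sum_perm_maj_fixed_letters.
rewrite -big_distrr /=; congr (_ * _).
transitivity (\prod_(i < n) \sum_(c : 'I_(rmax r) | inS r i ((val c)%:Z - 1))
    (if 0 < (val c)%:Z - 1 then 'X else 1 : {poly int})).
  by rewrite bigA_distr_big_dep; apply: eq_big.
apply: eq_bigr => i _; apply: sum_letter_weights; first exact: hr.
by rewrite /rmax addn2 !ltnS (leq_bigmax i).
Qed.
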